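(* Let $\mathcal{H}$ be a real Hilbert space, $r$ a strictly positive integer, $z\in\mathcal{H}$, $A\colon\mathcal{H}\to 2^{\mathcal{H}}$ and $C\colon\mathcal{H}\to\mathcal{H}$. For every $k\in\{1,\ldots,r\}$ let $\mathcal{G}_k,\mathcal{K}_k$ be real Hilbert spaces, $B_k\colon\mathcal{G}_k\to2^{\mathcal{G}_k}$, $D_k\colon\mathcal{K}_k\to 2^{\mathcal{K}_k}$, and let $L_k\colon\mathcal{H}\to\mathcal{G}_k$, $M_k\colon\mathcal{H}\to\mathcal{K}_k$ be bounded linear operators. Set $\boldsymbol{\mathcal{H}}=\bigoplus_{k=1}^{r}\mathcal{H}$ (interpreted as $\mathcal{H}\oplus\mathcal{H}^r$, elements $(x,y_1,\ldots,y_r)$), $\boldsymbol{\mathcal{G}}=\bigoplus_{k=1}^r\mathcal{G}_k$, $\boldsymbol{\mathcal{K}}=\bigoplus_{k=1}^r\mathcal{K}_k$, and define $\boldsymbol{A}\colon(x,y_1,\ldots,y_r)\mapsto(Ax+Cx-z)\times\{0\}\times\cdots\times\{0\}$, $\boldsymbol{B}\colon(s_1,\ldots,s_r,t_1,\ldots,t_r)\mapsto B_1s_1\times\cdots\times B_rs_r\times D_1t_1\times\cdots\times D_rt_r$, $\boldsymbol{L}\colon(x,y_1,\ldots,y_r)\mapsto(L_1x-L_1y_1,\ldots,L_rx-L_ry_r,M_1y_1,\ldots,M_ry_r)$. Suppose there exists $\overline{\boldsymbol{x}}=(\overline{x},\overline{y_1},\ldots,\overline{y_r})$ such that $\boldsymbol{0}\in\boldsymbol{A}\overline{\boldsymbol{x}}+\boldsymbol{L}^*\big(\boldsymbol{B}(\boldsymbol{L}\overline{\boldsymbol{x}})\big)$.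 Then there exist $(\overline{v_1},\ldots,\overline{v_r})\in\boldsymbol{\mathcal{G}}$ and $(\overline{w_1},\ldots,\overline{w_r})\in\boldsymbol{\mathcal{K}}$ such that: (i) $z-\sum_{k=1}^rL_k^*\overline{v_k}\in A\overline{x}+C\overline{x}$; (ii) for every $k$: $L_k^*\overline{v_k}=M_k^*\overline{w_k}$, $L_k\overline{x}-L_k\overline{y_k}\in B_k^{-1}\overline{v_k}$, and $M_k\overline{y_k}\in D_k^{-1}\overline{w_k}$; (iii) $\overline{x}$ solves $z\in A\overline{x}+\sum_{k=1}^r\big((L_k^*\circ B_k\circ L_k)\,\square\,(M_k^*\circ D_k\circ M_k)\big)\overline{x}+C\overline{x}$; (iv) $(\overline{v_1},\ldots,\overline{v_r})$ solves: for every $k\in\{1,\ldots,r\}$, $0\in -L_k\Big((A+C)^{-1}\big(z-\sum_{l=1}^rL_l^*\overline{v_l}\big)\Big)+B_k^{-1}\overline{v_k}+L_k\Big(\big(M_k^*\triangleright D_k^{-1}\big)(L_k^*\overline{v_k})\Big)$.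
   Context: For a set-valued operator $T$, $T^{-1}$ denotes the inverse operator (graph $\{(u,x):u\in Tx\}$). Parallel sum: $T_1\,\square\,T_2=(T_1^{-1}+T_2^{-1})^{-1}$. Parallel composition: for $T\colon\mathcal{X}\to2^{\mathcal{X}}$ and bounded linear $L\colon\mathcal{X}\to\mathcal{Y}$, $L\triangleright T=(L\circ T^{-1}\circ L^* )^{-1}\colon\mathcal{Y}\to 2^{\mathcal{Y}}$; here $M_k^*\triangleright D_k^{-1}=(M_k^*\circ D_k\circ M_k)^{-1}$. $\oplus$ denotes Hilbert direct sum. *)

From HB Require Import structures.
From mathcomp Require Import all_boot all_order all_algebra.
From mathcomp Require Import all_classical all_reals.
Set Implicit Arguments. Unset Strict Implicit. Unset Printing Implicit Defensive.
Import Order.TTheory GRing.Theory Num.Theory.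
Local Open Scope ring_scope.
Local Open Scope classical_set_scope.

Record hilbert (R : realType) := Hilbert {
  hsort :> lmodType R;
  hinner : hsort -> hsort -> R;
  hinner_sym : forall x y, hinner x y = hinner y x;
  hinner_linl : forall (a : R) (x y u : hsort),
      hinner (a *: x + y) u = a * hinner x u + hinner y u;
  hinner_ge0 : forall x, 0 <= hinner x x;
  hinner_eq0 : forall x, hinner x x = 0 -> x = 0;
  hcomplete : forall u : nat -> hsort,
      (forall eps : R, 0 < eps -> exists N : nat, forall m n : nat,
          (N <= m)%N -> (N <= n)%N -> Num.sqrt (hinner (u m - u n) (u m - u n)) < eps) ->
      exists l : hsort, forall eps : R, 0 < eps -> exists N : nat, forall n : nat,
          (N <= n)%N -> Num.sqrt (hinner (u n - l) (u n - l)) < eps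
}.
Arguments hinner {R} h.

Definition hnorm (R : realType) (H : hilbert R) (x : H) : R :=
  Num.sqrt (hinner H x x).

(* bounded operator (linearity is given by the {linear _ -> _} type) *)
Definition bounded_op (R : realType) (H G : hilbert R) (L : H -> G) : Prop :=
  exists c : R, forall x : H, hnorm (L x) <= c * hnorm x.

Definition is_adjoint (R : realType) (H G : hilbert R) (L : H -> G) (Lst : G -> H) :=
  forall (x : H) (v : G), hinner G (L x) v = hinner H x (Lst v).

(* y \in T x  is written  T x y *)
Definition inv_op (X Y : Type) (T : X -> set Y) : Y -> set X := fun y x => T x y.
Definition add_op (X : Type) (Y : zmodType) (T1 T2 : X -> set Y) : X -> set Y :=
  fun x => [set y | exists y1 y2, T1 x y1 /\ T2 x y2 /\ y = y1 + y2].
Definition single_op (X Y : Type) (f : X -> Y) : X -> set Y := fun x => [set f x].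
Definition par_sum (X : zmodType) (T1 T2 : X -> set X) : X -> set X :=
  inv_op (add_op (inv_op T1) (inv_op T2)).
Definition comp3 (X Y : Type) (L : X -> Y) (T : Y -> set Y) (Lst : Y -> X) : X -> set X :=
  fun x => Lst @` T (L x).
(* parallel composition  L |> T = (L o T^-1 o L^* )^-1, Ladj the adjoint of L *)
Definition par_comp (X Y : Type) (L : X -> Y) (Ladj : Y -> X) (T : X -> set X) : Y -> set Y :=
  inv_op (fun y => L @` (inv_op T (Ladj y))).
Definition sum_ops (r : nat) (X : Type) (Y : zmodType) (T : 'I_r -> X -> set Y) : X -> set Y :=
  fun x => [set y | exists u : 'I_r -> Y, (forall k, T k x (u k)) /\ y = \sum_(k < r) u k].

Definition bH (R : realType) (H : hilbert R) (r : nat) := (H * ('I_r -> H))%type.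
Definition bGK (R : realType) (r : nat) (G K : 'I_r -> hilbert R) :=
  ((forall k : 'I_r, G k) * (forall k : 'I_r, K k))%type.

Definition inner_bH (R : realType) (H : hilbert R) (r : nat) (p q : bH H r) : R :=
  hinner H p.1 q.1 + \sum_(k < r) hinner H (p.2 k) (q.2 k).
Definition inner_bGK (R : realType) (r : nat) (G K : 'I_r -> hilbert R)
  (p q : bGK G K) : R :=
  \sum_(k < r) hinner (G k) (p.1 k) (q.1 k) + \sum_(k < r) hinner (K k) (p.2 k) (q.2 k).

Definition bA (R : realType) (H : hilbert R) (r : nat) (A : H -> set H) (C : H -> H) (z : H)
  : bH H r -> set (bH H r) :=
  fun xx => [set p | (exists a, A xx.1 a /\ p.1 = a + C xx.1 - z) /\ (forall k, p.2 k = 0)].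

Definition bB (R : realType) (r : nat) (G K : 'I_r -> hilbert R)
  (B : forall k, G k -> set (G k)) (D : forall k, K k -> set (K k))
  : bGK G K -> set (bGK G K) :=
  fun q => [set p | (forall k, B k (q.1 k) (p.1 k)) /\ (forall k, D k (q.2 k) (p.2 k))].

Definition bL (R : realType) (H : hilbert R) (r : nat) (G K : 'I_r -> hilbert R)
  (L : forall k, H -> G k) (M : forall k, H -> K k) (xx : bH H r) : bGK G K :=
  (fun k => L k xx.1 - L k (xx.2 k), fun k => M k (xx.2 k)).

(** Since inner products separate the points of [bH], every adjoint of [bL]
    maps [(v, w)] to [(\sum_k L_k^* v_k, (M_k^* w_k - L_k^* v_k)_k)].  Hence
    for [(v, w) \in bB (bL xx)] realising [0 \in bA xx + bL^* (bB (bL xx))],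
    the first component of the inclusion gives (i) and the others give
    [L_k^* v_k = M_k^* w_k], i.e. (ii).  Conversely (i) and (ii) imply (iii),
    by splitting [x = (x - y_k) + y_k] to exhibit [L_k^* v_k] in the k-th
    parallel sum, and (iv), with the witnesses [x], [L_k x - L_k y_k], [y_k]. *)
From HB Require Import structures.
From mathcomp Require Import all_boot all_order all_algebra.
From mathcomp Require Import all_classical all_reals.
Import Order.TTheory GRing.Theory Num.Theory.
Local Open Scope ring_scope.
Local Open Scope classical_set_scope.

Section InnerProduct.
Variables (R : realType) (H : hilbert R).

Lemma hinnerBl (x y u : H) : hinner H (x - y) u = hinner H x u - hinner H y u.
Proof.
have := hinner_linl (-1) y x u.
by rewrite scaleN1r mulN1r (addrC (- y)) => ->; rewrite addrC.
Qed.

Lemma hinnerBr (x y u : H) : hinner H u (x - y) = hinner H u x - hinner H u y.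
Proof. by rewrite hinner_sym hinnerBl !(hinner_sym _ u). Qed.

Lemma hinner0r (u : H) : hinner H u 0 = 0.
Proof. by rewrite -(subrr u) hinnerBr subrr. Qed.

Lemma hinnerDr (x y u : H) : hinner H u (x + y) = hinner H u x + hinner H u y.
Proof.
by rewrite !(hinner_sym u); have := hinner_linl 1 x y u; rewrite scale1r mul1r.
Qed.

Lemma hinner_sumr (I : Type) (s : seq I) (F : I -> H) (u : H) :
  hinner H u (\sum_(i <- s) F i) = \sum_(i <- s) hinner H u (F i).
Proof. by elim/big_rec2: _ => [|i y1 y2 _ <-]; rewrite ?hinner0r ?hinnerDr. Qed.

Lemma hinner_eq0_sum (r : nat) (x : H) (y : 'I_r -> H) :
  hinner H x x + \sum_(k < r) hinner H (y k) (y k) = 0 -> x = 0 /\ y =1 (fun=> 0).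
Proof.
have y_ge0 i : 0 <= hinner H (y i) (y i) by apply: hinner_ge0.
move/eqP; rewrite paddr_eq0 ?hinner_ge0 ?sumr_ge0 // => /andP[/eqP x0 /eqP y0].
split=> [|k]; first exact: hinner_eq0.
by apply: hinner_eq0; apply: (psumr_eq0P _ y0).
Qed.

End InnerProduct.

Lemma inner_bH_separates (R : realType) (H : hilbert R) (r : nat) (p q : bH H r) :
  (forall xx : bH H r, inner_bH xx p = inner_bH xx q) -> p.1 = q.1 /\ p.2 =1 q.2.
Proof.
pose d : bH H r := (p.1 - q.1, fun k => p.2 k - q.2 k).
move=> /(_ d) pq; have : inner_bH d p - inner_bH d q = 0 by rewrite pq subrr.
rewrite /inner_bH opprD addrACA -hinnerBr -sumrB.
under eq_bigr => k _ do rewrite -hinnerBr.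
move=> /hinner_eq0_sum [d1 d2].
by split=> [|k]; apply: subr0_eq; [exact: d1 | exact: d2 k].
Qed.

Section AdjointOfbL.
Context {R : realType} {H : hilbert R} {r : nat} {G K : 'I_r -> hilbert R}.
Context {L : forall k, {linear H -> G k}} {M : forall k, {linear H -> K k}}.
Context {Lst : forall k, G k -> H} {Mst : forall k, K k -> H}.
Hypotheses (hLst : forall k, is_adjoint (L k) (Lst k))
           (hMst : forall k, is_adjoint (M k) (Mst k)).

Lemma inner_bL (xx : bH H r) (b : bGK G K) :
  inner_bGK (bL L M xx) b =
  inner_bH xx (\sum_(k < r) Lst k (b.1 k), fun k => Mst k (b.2 k) - Lst k (b.1 k)).
Proof.
rewrite /inner_bGK /inner_bH /= hinner_sumr.
under eq_bigr => k _ do rewrite hinnerBl !hLst.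
under [in RHS]eq_bigr => k _ do rewrite hinnerBr -hMst.
by rewrite !sumrB addrAC addrA.
Qed.

Lemma bL_adjointE {bLst : bGK G K -> bH H r} :
  (forall xx b, inner_bGK (bL L M xx) b = inner_bH xx (bLst b)) ->
  forall b : bGK G K,
    (bLst b).1 = \sum_(k < r) Lst k (b.1 k) /\
    (bLst b).2 =1 (fun k => Mst k (b.2 k) - Lst k (b.1 k)).
Proof.
move=> hbLst b; apply: (@inner_bH_separates _ _ _ _ (_, _)) => xx.
by rewrite -hbLst inner_bL.
Qed.

End AdjointOfbL.

Section KuhnTucker.
Context {R : realType} {H : hilbert R} {r : nat} {G K : 'I_r -> hilbert R}.
Context {z : H} {A : H -> set H} {C : H -> H}.
Context {B : forall k, G k -> set (G k)} {D : forall k, K k -> set (K k)}.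
Context {L : forall k, {linear H -> G k}} {M : forall k, {linear H -> K k}}.
Context {Lst : forall k, G k -> H} {Mst : forall k, K k -> H}.

Definition kuhn_tucker (x : H) (y : 'I_r -> H)
    (v : forall k, G k) (w : forall k, K k) : Prop :=
  add_op A (single_op C) x (z - \sum_(k < r) Lst k (v k)) /\
  (forall k, Lst k (v k) = Mst k (w k) /\
     inv_op (B k) (v k) (L k x - L k (y k)) /\
     inv_op (D k) (w k) (M k (y k))).

Lemma kuhn_tucker_primal x y v w :
  kuhn_tucker x y v w ->
  add_op (add_op A (sum_ops (fun k => par_sum (comp3 (L k) (B k) (Lst k))
                                            (comp3 (M k) (D k) (Mst k)))))
         (single_op C) x z.
Proof.
move=> [[a [c [Aa [-> hz]]]] hvw].
exists (a + \sum_(k < r) Lst k (v k)), (C x); split; last first.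
  by split=> //; rewrite addrAC -hz subrK.
exists a, (\sum_(k < r) Lst k (v k)); split=> //; split=> //.
exists (fun k => Lst k (v k)); split=> // k.
have [vw [Bv Dw]] := hvw k.
exists (x - y k), (y k); split; last split; last by rewrite subrK.
- by exists (v k); rewrite ?linearB.
- by exists (w k); rewrite ?vw.
Qed.

Lemma kuhn_tucker_dual x y v w :
  kuhn_tucker x y v w ->
  forall k, exists p q t,
    inv_op (add_op A (single_op C)) (z - \sum_(l < r) Lst l (v l)) p /\
    inv_op (B k) (v k) q /\
    par_comp (Mst k) (M k) (inv_op (D k)) (Lst k (v k)) t /\
    0 = - L k p + q + L k t.
Proof.
move=> [Ax hvw] k; have [vw [Bv Dw]] := hvw k.
exists x, (L k x - L k (y k)), (y k); do !split=> //.
- by exists (w k); rewrite ?vw.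
- by rewrite addrA addNr add0r addNr.
Qed.

Lemma kuhn_tucker_of_zero_in_bA_bLst_bB {bLst : bGK G K -> bH H r} :
  (forall k, is_adjoint (L k) (Lst k)) -> (forall k, is_adjoint (M k) (Mst k)) ->
  (forall xx b, inner_bGK (bL L M xx) b = inner_bH xx (bLst b)) ->
  forall xx : bH H r,
  (exists a : bH H r, bA A C z xx a /\
     exists b : bGK G K, bB B D (bL L M xx) b /\
       (a.1 + (bLst b).1, fun k => a.2 k + (bLst b).2 k) = (0, fun _ => 0)) ->
  exists v w, kuhn_tucker xx.1 xx.2 v w.
Proof.
move=> hLst hMst hbLst xx [a [[[a0 [Aa0 a1]] a2] [b [[Bb Db] [e1 e2]]]]].
have [bLst1 bLst2] := bL_adjointE hLst hMst hbLst b.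
exists b.1, b.2; split.
  exists a0, (C xx.1); split=> //; split=> //.
  by apply/eqP; rewrite -bLst1 eq_sym -subr_eq0 -e1 a1 opprB addrA addrAC.
move=> k; split; last by split.
apply/eqP; rewrite eq_sym -subr_eq0.
by have /eqP := congr1 (fun f => f k) e2; rewrite /= a2 add0r bLst2.
Qed.

End KuhnTucker.

Arguments kuhn_tucker {R H r G K} z A C B D L M Lst Mst x y v w.

Theorem proposition3p1 (R : realType) (H : hilbert R) (r : nat) (hr : (0 < r)%N)
  (z : H) (A : H -> set H) (C : H -> H)
  (G K : 'I_r -> hilbert R)
  (B : forall k, G k -> set (G k)) (D : forall k, K k -> set (K k))
  (L : forall k, {linear H -> G k}) (M : forall k, {linear H -> K k})
  (hLb : forall k, bounded_op (L k)) (hMb : forall k, bounded_op (M k))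
  (Lst : forall k, G k -> H) (Mst : forall k, K k -> H)
  (hLst : forall k, is_adjoint (L k) (Lst k)) (hMst : forall k, is_adjoint (M k) (Mst k))
  (bLst : bGK G K -> bH H r)
  (hbLst : forall (xx : bH H r) (b : bGK G K),
      inner_bGK (bL L M xx) b = inner_bH xx (bLst b)) :
  forall xx : bH H r,
  (exists a : bH H r, bA A C z xx a /\
     exists b : bGK G K, bB B D (bL L M xx) b /\
       (a.1 + (bLst b).1, fun k => a.2 k + (bLst b).2 k) = (0, fun _ => 0)) ->
  exists (v : forall k, G k) (w : forall k, K k),
    (* (i) *)
    add_op A (single_op C) xx.1 (z - \sum_(k < r) Lst k (v k)) /\
    (* (ii) *)
    (forall k, Lst k (v k) = Mst k (w k) /\
       inv_op (B k) (v k) (L k xx.1 - L k (xx.2 k)) /\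
       inv_op (D k) (w k) (M k (xx.2 k))) /\
    (* (iii) *)
    add_op (add_op A (sum_ops (fun k => par_sum (comp3 (L k) (B k) (Lst k))
                                              (comp3 (M k) (D k) (Mst k)))))
           (single_op C) xx.1 z /\
    (* (iv) *)
    (forall k, exists p q t,
       inv_op (add_op A (single_op C)) (z - \sum_(l < r) Lst l (v l)) p /\
       inv_op (B k) (v k) q /\
       par_comp (Mst k) (M k) (inv_op (D k)) (Lst k (v k)) t /\
       0 = - L k p + q + L k t).
Proof.
move=> xx /(kuhn_tucker_of_zero_in_bA_bLst_bB hLst hMst hbLst) [v [w kt]].
exists v, w; split; first exact: kt.1.
split; first exact: kt.2.
split; [exact: kuhn_tucker_primal kt | exact: kuhn_tucker_dual kt].
Qed.
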